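(* Let $N_1>0$, $N_2>0$, $\chi>0$ and set $\alpha=\pi\big(\sqrt{N_2/\pi}+N_1/2\big)^2$, $\beta=\alpha/\sqrt{\pi N_2}$, $\tau=\sqrt{\pi N_2}\,N_1$, $\rho=1+N_2/\tau$ (so $\rho>1$). Define on $(0,1/\rho)$ $$S(\phi)=\frac{\phi}{\tau}\ln\frac{\alpha\phi}{\tau}+\frac{\phi}{N_1}\ln\frac{\beta\phi}{\tau}+(1-\rho\phi)\ln(1-\rho\phi),\qquad H(\phi)=\chi\phi(1-\rho\phi),$$ and $\kappa(\phi)=\dfrac{1}{36\phi(1-\phi)}$. Then: (1) $S$ and $-H$ are both convex on $(0,1/\rho)$; (2) $K(u,v):=\kappa(u)v^2$ is convex on $(0,1/\rho)\times\mathbb{R}$; (3) $K_1(u,v):=\big(\kappa(u)-\tfrac{1}{36}\big)v^2$ is convex on $(0,1/\rho)\times\mathbb{R}$ and $K_2(v):=\tfrac{1}{36}v^2$ is convex on $\mathbb{R}$. *)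

From mathcomp Require Import all_boot all_order all_algebra.
From mathcomp Require Import all_classical all_reals all_analysis.

Set Implicit Arguments.
Unset Strict Implicit.
Unset Printing Implicit Defensive.

Import Order.TTheory GRing.Theory Num.Theory.
Local Open Scope ring_scope.
Local Open Scope classical_set_scope.

Section defs.
Variables (R : realType) (N1 N2 chi : R).

Definition alpha : R := pi * (Num.sqrt (N2 / pi) + N1 / 2) ^+ 2.
Definition beta : R := alpha / Num.sqrt (pi * N2).
Definition tau : R := Num.sqrt (pi * N2) * N1.
Definition rho : R := 1 + N2 / tau.

Definition S (phi : R) : R :=
  phi / tau * ln (alpha * phi / tau)
  + phi / N1 * ln (beta * phi / tau)
  + (1 - rho * phi) * ln (1 - rho * phi).

Definition H (phi : R) : R := chi * phi * (1 - rho * phi).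

End defs.

Definition kappa (R : realType) (phi : R) : R := (36 * phi * (1 - phi))^-1.

Definition K (R : realType) (p : R * R) : R := kappa p.1 * p.2 ^+ 2.
Definition K1 (R : realType) (p : R * R) : R := (kappa p.1 - 36^-1) * p.2 ^+ 2.
Definition K2 (R : realType) (v : R) : R := 36^-1 * v ^+ 2.

From mathcomp Require Import all_boot all_order all_algebra.
From mathcomp Require Import all_classical all_reals all_analysis.
From mathcomp Require Import ring lra.
Import Order.TTheory GRing.Theory Num.Theory.
Local Open Scope ring_scope.
Local Open Scope classical_set_scope.
Local Open Scope convex_scope.

(* Each function is assembled from convex pieces by operations that preserve
   convexity.  [S] is a nonnegative combination of [x ln x] composed with affine
   maps, and [x ln x] lies above its tangents.  [-H] and [K2] are convex
   quadratics.  [K] and [K1] have the form [v^2 / w u] with [w] positive and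
   concave on (0,1), namely [w u = 36 u (1 - u)] and
   [w u = 36 u (1 - u) / (1 - u + u^2)]; since [(v, w) |-> v^2 / w] is jointly
   convex and nonincreasing in [w], such a composite is convex. *)

Lemma conv_realE {R : numDomainType} (x y : R^o) (t : {i01 R}) :
  x <| t |> y = t%:inum * x + (1 - t%:inum) * y.
Proof. by []. Qed.

(* [convex_lmodType R^o] and [R^o] carry distinct (convertible) convex-space
   structures, hence two rewriting rules. *)
Lemma conv_lmod_realE {R : numDomainType} (x y : convex_lmodType R^o) (t : {i01 R}) :
  x <| t |> y = t%:inum * x + (1 - t%:inum) * y :> R.
Proof. by []. Qed.

Lemma convex_set_setT {R : numDomainType} {E : lmodType R} :
  convex_set (setT : set (convex_lmodType E)).
Proof. by move=> *; rewrite inE. Qed.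

Lemma convex_setX {R : numDomainType} {E F : lmodType R}
    (A : set (convex_lmodType E)) (B : set (convex_lmodType F)) :
  convex_set A -> convex_set B -> convex_set (A `*` B : set (convex_lmodType (E * F)%type)).
Proof.
move=> cA cB [x1 x2] [y1 y2] t /[!inE] -[/= x1A x2B] [/= y1A y2B].
by split; [move: (cA x1 y1 t) | move: (cB x2 y2 t)]; rewrite !inE; apply.
Qed.

Lemma is_interval_convex_set {R : realDomainType} (A : set R^o) :
  is_interval A -> convex_set A.
Proof.
move=> iA x y t /[!inE] xA yA; rewrite conv_lmod_realE.
have /andP[t0 t1] : 0 <= t%:inum <= 1 by rewrite ge0 le1.
have [xy|/ltW yx] := leP (x : R) y.
  by apply: (iA x y) => //; apply/andP; split; nra.
by apply: (iA y x) => //; apply/andP; split; nra.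
Qed.

Lemma convex_set_itv {R : realDomainType} (i : interval R) :
  convex_set ([set` i] : set R^o).
Proof. exact/is_interval_convex_set/interval_is_interval. Qed.

Section convex_function_lemmas.
Context {R : realFieldType} {E : lmodType R}.
Implicit Types (D : set (convex_lmodType E)) (f g : convex_lmodType E -> R^o).

Lemma convex_functionD D f g : convex_function D f -> convex_function D g ->
  convex_function D (fun x => f x + g x).
Proof.
move=> cf cg t x y xD yD; apply: le_trans (lerD (cf t x y xD yD) (cg t x y xD yD)) _.
by rewrite !convRE; lra.
Qed.

Lemma convex_functionZ D c f : 0 <= c -> convex_function D f ->
  convex_function D (fun x => c * f x).
Proof.
move=> c0 cf t x y xD yD; apply: le_trans (ler_wpM2l c0 (cf t x y xD yD)) _.
by rewrite !convRE; lra.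
Qed.

Lemma convex_function_subset {D D' f} : D' `<=` D -> convex_function D f ->
  convex_function D' f.
Proof. by move=> D'D cf t x y /[!inE] /D'D xD /D'D yD; apply: cf; rewrite inE. Qed.

Lemma eq_convex_function {D f g} : convex_set D -> {in D, f =1 g} ->
  convex_function D g -> convex_function D f.
Proof.
move=> cD fg cg t x y xD yD.
by rewrite !fg //; [exact: cg | exact: cD].
Qed.

End convex_function_lemmas.

Section real_convex_functions.
Context {R : realFieldType}.
Implicit Types (A D : set R^o) (f : R^o -> R^o).

Lemma convex_function_comp_affine A D f (a b : R) :
  (forall x, D x -> A (a * x + b)) -> convex_function A f ->
  convex_function D (fun x => f (a * x + b)).
Proof.
move=> DA cf t x y /[!inE] /DA xA /DA yA.
have -> : a * (x <| t |> y) + b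
    = (a * x + b : convex_lmodType R^o) <| t |> (a * y + b).
  by rewrite !conv_lmod_realE; ring.
by apply: cf; rewrite inE.
Qed.

Lemma convex_function_tangent A f (df : R -> R) : convex_set A ->
  (forall x z, A x -> A z -> f z + df z * (x - z) <= f x) ->
  convex_function A f.
Proof.
move=> cA tangent t x y xA yA; have /[!inE] zA := cA x y t xA yA.
move: xA yA => /[!inE] xA yA; rewrite conv_realE.
have t0 : 0 <= t%:inum by [].
have t1 : 0 <= 1 - t%:inum by rewrite subr_ge0.
have /(ler_wpM2l t0) tx := tangent x _ xA zA.
have /(ler_wpM2l t1) ty := tangent y _ yA zA.
apply: le_trans (lerD tx ty); rewrite conv_lmod_realE.
set z := _ + _; rewrite -subr_ge0 (_ : _ - _ = 0) //.
by rewrite /z; ring.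
Qed.

Lemma convex_quadratic (a b : R) : 0 <= a ->
  convex_function setT (fun x : R^o => a * x ^+ 2 + b * x).
Proof.
move=> a0; apply: (convex_function_tangent _ _ (fun z => 2 * a * z + b)).
  by move=> ? ? ? _ _; rewrite inE.
move=> x z _ _; rewrite -subr_ge0.
have -> : a * x ^+ 2 + b * x - (a * z ^+ 2 + b * z + (2 * a * z + b) * (x - z))
  = a * (x - z) ^+ 2 by ring.
by rewrite mulr_ge0 ?sqr_ge0.
Qed.

Lemma sqr_div_convex (v1 v2 w1 w2 t : R) : 0 < w1 -> 0 < w2 -> 0 <= t <= 1 ->
  (t * v1 + (1 - t) * v2) ^+ 2 / (t * w1 + (1 - t) * w2)
    <= t * (v1 ^+ 2 / w1) + (1 - t) * (v2 ^+ 2 / w2).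
Proof.
move=> w1_gt0 w2_gt0 /andP[t0 t1].
have w_gt0 : 0 < t * w1 + (1 - t) * w2 by nra.
rewrite -subr_ge0.
have -> : t * (v1 ^+ 2 / w1) + (1 - t) * (v2 ^+ 2 / w2)
    - (t * v1 + (1 - t) * v2) ^+ 2 / (t * w1 + (1 - t) * w2)
  = t * (1 - t) * (v1 * w2 - v2 * w1) ^+ 2 / (w1 * w2 * (t * w1 + (1 - t) * w2)).
  by field; rewrite !gt_eqF.
apply: divr_ge0; last by rewrite ltW // mulr_gt0 // mulr_gt0.
by rewrite mulr_ge0 ?sqr_ge0 // mulr_ge0 // subr_ge0.
Qed.

Lemma convex_function_sqr_div A (w : R -> R) :
  convex_set A -> (forall u, A u -> 0 < w u) -> convex_function A (fun u => - w u) ->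
  convex_function (A `*` setT : set (R^o * R^o)%type) (fun p => p.2 ^+ 2 / w p.1).
Proof.
move=> cA w_gt0 concave_w t [u1 v1] [u2 v2] /[!inE] -[/= u1A _] [/= u2A _].
have /[!inE] uA := cA u1 u2 t (mem_set u1A) (mem_set u2A).
have := concave_w t u1 u2 (mem_set u1A) (mem_set u2A); rewrite conv_realE => wc.
have t01 : 0 <= t%:inum <= 1 by rewrite ge0 le1.
change (t%:inum *: v1 + _ *: v2) with (t%:inum * v1 + (1 - t%:inum) * v2).
change (w (t%:inum *: u1 + _ *: u2)) with (w (u1 <| t |> u2)).
have w1 := w_gt0 _ u1A; have w2 := w_gt0 _ u2A; have w12 := w_gt0 _ uA.
rewrite [leRHS]conv_realE.
apply: (le_trans _ (sqr_div_convex v1 v2 _ _ _ w1 w2 t01)).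
rewrite ler_wpM2l ?sqr_ge0 // lef_pV2 ?posrE //; first lra.
by case/andP: t01 => ? ?; nra.
Qed.

End real_convex_functions.

Section xlnx.
Context {R : realType}.

Definition xlnx (x : R) : R := x * ln x.

Lemma xlnx_tangent (x z : R) : 0 < x -> 0 < z ->
  z * ln z + (ln z + 1) * (x - z) <= x * ln x.
Proof.
move=> x0 z0; have zx_gt0 : 0 < z / x by rewrite divr_gt0.
have : ln (1 + (z / x - 1)) <= z / x - 1 by apply: le_ln1Dx; lra.
rewrite addrC subrK ln_div ?posrE // => /(ler_wpM2l (ltW x0)).
rewrite mulrBr [x * (z / x - 1)]mulrBr mulrCA divff ?gt_eqF //.
lra.
Qed.

Lemma convex_xlnx : convex_function (`]0, +oo[ : set R^o) xlnx.
Proof.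
apply: (convex_function_tangent _ _ (fun z => ln z + 1)); first exact: convex_set_itv.
by move=> x z /= /[!in_itv] /= /[!andbT]; apply: xlnx_tangent.
Qed.

End xlnx.

Section kappa_weights.
Context {R : realType}.

Definition kappa_weight (u : R) : R := 36 * u * (1 - u).

Definition kappa_gap_weight (u : R) : R := 36 * u * (1 - u) / (1 - u + u ^+ 2).

Lemma kappa_weight_gt0 (u : R) : 0 < u < 1 -> 0 < kappa_weight u.
Proof. by move=> /andP[u0 u1]; rewrite /kappa_weight; nra. Qed.

Lemma kappa_gap_weight_gt0 (u : R) : 0 < u < 1 -> 0 < kappa_gap_weight u.
Proof.
move=> u01; apply: divr_gt0; first exact: kappa_weight_gt0.
by case/andP: u01 => u0 u1; nra.
Qed.

Lemma concave_kappa_weight :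
  convex_function (setT : set R^o) (fun u => - kappa_weight u).
Proof.
have -> : (fun u => - kappa_weight u) = (fun u : R^o => 36 * u ^+ 2 + (- 36) * u).
  by apply/funext => u; rewrite /kappa_weight; ring.
exact: convex_quadratic.
Qed.

Lemma kappa_gap_weight_tangent (x z : R) : 0 < x < 1 -> 0 < z < 1 ->
  kappa_gap_weight x
    <= kappa_gap_weight z + 36 * (1 - 2 * z) / (1 - z + z ^+ 2) ^+ 2 * (x - z).
Proof.
move=> /andP[x0 x1] /andP[z0 z1].
have qx : 0 < 1 - x + x ^+ 2 by nra.
have qz : 0 < 1 - z + z ^+ 2 by nra.
rewrite -subr_ge0 /kappa_gap_weight.
have -> : 36 * z * (1 - z) / (1 - z + z ^+ 2)
    + 36 * (1 - 2 * z) / (1 - z + z ^+ 2) ^+ 2 * (x - z)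
    - 36 * x * (1 - x) / (1 - x + x ^+ 2)
  = 36 * (x - z) ^+ 2 * (3 / 4 - (z - 1 / 2) * (z + 2 * x - 3 / 2))
    / ((1 - x + x ^+ 2) * (1 - z + z ^+ 2) ^+ 2).
  by field; rewrite !gt_eqF.
(* the two products below sum to [3/2 - 2 (z - 1/2) (z + 2 x - 3/2)] *)
have h1 : 0 < (1 - z) * (z + 2 * x) by rewrite mulr_gt0 //; lra.
have h2 : 0 < z * (3 - z - 2 * x) by rewrite mulr_gt0 //; lra.
apply: divr_ge0; last by rewrite ltW // mulr_gt0 // exprn_gt0.
by apply: mulr_ge0; [rewrite mulr_ge0 // sqr_ge0 | lra].
Qed.

Lemma concave_kappa_gap_weight :
  convex_function (`]0, 1[ : set R^o) (fun u => - kappa_gap_weight u).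
Proof.
apply: (convex_function_tangent _ _
  (fun z => - (36 * (1 - 2 * z) / (1 - z + z ^+ 2) ^+ 2))).
  exact: convex_set_itv.
move=> x z /= /[!in_itv] /= x01 z01; have := kappa_gap_weight_tangent _ _ x01 z01.
lra.
Qed.

Lemma convex_K :
  convex_function (`]0, 1[ `*` setT : set (R^o * R^o)%type) (@K R).
Proof.
have -> : @K R = fun p => p.2 ^+ 2 / kappa_weight p.1.
  by apply/funext => -[u v]; rewrite /K /kappa mulrC.
apply: convex_function_sqr_div; first exact: convex_set_itv.
  by move=> u /= /[!in_itv] /=; exact: kappa_weight_gt0.
exact: convex_function_subset concave_kappa_weight.
Qed.

Lemma K1_sqr_div :
  {in (`]0, 1[ `*` setT : set (R^o * R^o)%type),
    @K1 R =1 fun p => p.2 ^+ 2 / kappa_gap_weight p.1}.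
Proof.
move=> [u v] /[!inE] -[/= /[!in_itv] /= /andP[u0 u1] _].
have q_gt0 : 0 < 1 - u + u ^+ 2 by nra.
by rewrite /K1 /kappa /kappa_gap_weight /=; field; rewrite !gt_eqF // subr_gt0.
Qed.

Lemma convex_K1 :
  convex_function (`]0, 1[ `*` setT : set (R^o * R^o)%type) (@K1 R).
Proof.
apply: (eq_convex_function _ K1_sqr_div).
  exact: convex_setX (convex_set_itv _) convex_set_setT.
apply: convex_function_sqr_div concave_kappa_gap_weight; first exact: convex_set_itv.
by move=> u /= /[!in_itv] /=; exact: kappa_gap_weight_gt0.
Qed.

Lemma convex_K2 : convex_function (setT : set R^o) (@K2 R).
Proof.
have -> : @K2 R = fun v => 36^-1 * v ^+ 2 + 0 * v.
  by apply/funext => v; rewrite /K2 mul0r addr0.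
by apply: convex_quadratic; rewrite invr_ge0.
Qed.

End kappa_weights.

Section parameters.
Context {R : realType} {N1 N2 : R}.
Hypotheses (N1_gt0 : 0 < N1) (N2_gt0 : 0 < N2).

Lemma tau_gt0 : 0 < tau N1 N2.
Proof. by rewrite mulr_gt0 // sqrtr_gt0 mulr_gt0 // pi_gt0. Qed.

Lemma alpha_gt0 : 0 < alpha N1 N2.
Proof.
by rewrite mulr_gt0 ?pi_gt0 // exprn_gt0 // ltr_wpDl ?sqrtr_ge0 // divr_gt0.
Qed.

Lemma beta_gt0 : 0 < beta N1 N2.
Proof. by rewrite divr_gt0 ?alpha_gt0 // sqrtr_gt0 mulr_gt0 // pi_gt0. Qed.

Lemma rho_gt1 : 1 < rho N1 N2.
Proof. by rewrite ltrDl divr_gt0 // tau_gt0. Qed.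

Lemma rho_gt0 : 0 < rho N1 N2.
Proof. exact: lt_trans ltr01 rho_gt1. Qed.

Lemma rhoV_lt1 : (rho N1 N2)^-1 < 1.
Proof. by rewrite invf_lt1 ?rho_gt1 ?rho_gt0. Qed.

Lemma S_xlnxE : S N1 N2 = fun u =>
  (alpha N1 N2)^-1 * xlnx (alpha N1 N2 / tau N1 N2 * u + 0)
  + tau N1 N2 / (N1 * beta N1 N2) * xlnx (beta N1 N2 / tau N1 N2 * u + 0)
  + xlnx (- rho N1 N2 * u + 1).
Proof.
have a0 := alpha_gt0; have b0 := beta_gt0; have t0 := tau_gt0.
apply/funext => u; rewrite /S /xlnx; congr (_ + _ + _).
- by rewrite addr0 [alpha _ _ / _ * u]mulrAC; field; rewrite !gt_eqF.
- by rewrite addr0 [beta _ _ / _ * u]mulrAC; field; rewrite !gt_eqF.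
- by rewrite mulNr addrC.
Qed.

Lemma rho_mul_lt1 (x : R) : x < (rho N1 N2)^-1 -> rho N1 N2 * x < 1.
Proof.
by move=> x_lt; rewrite -(divff (lt0r_neq0 rho_gt0)) ltr_pM2l ?rho_gt0.
Qed.

Lemma convex_S : convex_function (`]0, (rho N1 N2)^-1[ : set R^o) (S N1 N2).
Proof.
have a0 := alpha_gt0; have b0 := beta_gt0; have t0 := tau_gt0.
rewrite S_xlnxE; apply: convex_functionD; first apply: convex_functionD.
- apply: convex_functionZ; first by rewrite invr_ge0 ltW.
  apply: convex_function_comp_affine convex_xlnx => x /= /[!in_itv] /= /andP[x0 _].
  by rewrite andbT addr0 mulr_gt0 // divr_gt0.
- apply: convex_functionZ; first by rewrite ltW // divr_gt0 // mulr_gt0.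
  apply: convex_function_comp_affine convex_xlnx => x /= /[!in_itv] /= /andP[x0 _].
  by rewrite andbT addr0 mulr_gt0 // divr_gt0.
- apply: convex_function_comp_affine convex_xlnx => x /= /[!in_itv] /= /andP[_].
  by move=> /rho_mul_lt1 x_lt; rewrite andbT mulNr addrC subr_gt0.
Qed.

Lemma convex_oppH {chi : R} : 0 <= chi ->
  convex_function (setT : set R^o) (fun x => - H N1 N2 chi x).
Proof.
move=> chi0; have -> : (fun x => - H N1 N2 chi x)
    = (fun x : R^o => chi * rho N1 N2 * x ^+ 2 + (- chi) * x).
  by apply/funext => x; rewrite /H; ring.
by apply: convex_quadratic; rewrite mulr_ge0 // ltW // rho_gt0.
Qed.

End parameters.

Theorem proposition3p1 (R : realType) (N1 N2 chi : R)
  (hN1 : 0 < N1) (hN2 : 0 < N2) (hchi : 0 < chi) :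
  let D : set R^o := `]0, (rho N1 N2)^-1[%classic in
  let D2 : set (R^o * R^o)%type := `]0, (rho N1 N2)^-1[%classic `*` setT in
  [/\ convex_function (E := R^o) D (S N1 N2),
      convex_function (E := R^o) D (fun x => - H N1 N2 chi x),
      convex_function (E := (R^o * R^o)%type) D2 (@K R),
      convex_function (E := (R^o * R^o)%type) D2 (@K1 R)
    & convex_function (E := R^o) setT (@K2 R)].
Proof.
move=> D D2.
have D_sub : D `<=` `]0, 1[.
  move=> x; rewrite /D /= !in_itv /= => /andP[x0 x_lt].
  by rewrite x0 (lt_trans x_lt) // rhoV_lt1.
have D2_sub : D2 `<=` `]0, 1[ `*` setT by move=> [u v] [/D_sub].
split.
- exact: convex_S hN1 hN2.
- exact: convex_function_subset (subsetT D) (convex_oppH hN1 hN2 (ltW hchi)).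
- exact: convex_function_subset D2_sub convex_K.
- exact: convex_function_subset D2_sub convex_K1.
- exact: convex_K2.
Qed.
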